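(* For all integers $k\ge 1$ and $t\ge 1$, $$B_0(k+1,2t+1)+B_1(k,2t)=B_1(k,2t-2k)+p_{de}(2t-k).$$
   Context: For a partition $\pi$, $s(\pi)$ is its smallest part. For $j\ge1$, $\mathrm{Spt}j_{do}(n)$ is the set of partitions $\pi$ of $n$ in which $s(\pi)$ occurs exactly $j$ times and the remaining parts (those larger than $s(\pi)$) are pairwise distinct and each has parity different from that of $s(\pi)$. $B_0(j,n)$ (resp. $B_1(j,n)$) is the number of $\pi\in\mathrm{Spt}j_{do}(n)$ whose number of parts greater than $s(\pi)$ is even (resp. odd); $B_0(j,n)=B_1(j,n)=0$ for $n\le 0$. $p_{de}(n)$ is the number of partitions of $n$ into distinct even parts, with $p_{de}(0)=1$ and $p_{de}(n)=0$ for $n<0$. *)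

From mathcomp Require Import all_boot all_order all_algebra.
Set Implicit Arguments. Unset Strict Implicit. Unset Printing Implicit Defensive.
Import Order.TTheory GRing.Theory Num.Theory.

(* A partition of n is encoded by its multiplicity function:
   m : {ffun 'I_n -> 'I_n.+1}, where m i is the number of times the part
   (i.+1) occurs (each multiplicity is at most n). *)
Definition mult (n : nat) := {ffun 'I_n -> 'I_n.+1}.

Definition is_partition (n : nat) (m : mult n) : bool :=
  (\sum_(i < n) i.+1 * m i)%N == n.

(* m is in Spt j_do(n), with smallest part s.+1 (index s), and the number of
   parts greater than the smallest part has parity b (b = false: even,
   b = true: odd). *)
Definition spt_do_par (n j : nat) (b : bool) (m : mult n) : bool :=
  [exists s : 'I_n,
    [&& (0 < m s)%N,
        [forall i : 'I_n, (i < s)%N ==> (m i == 0 :> nat)],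
        (m s == j :> nat),
        [forall i : 'I_n, (s < i)%N ==>
           ((m i <= 1)%N &&
            ((m i != 0 :> nat) ==> (odd i.+1 != odd s.+1)))]
      & odd (\sum_(i < n | (s < i)%N) m i) == b]].

Definition Bnat (b : bool) (j n : nat) : nat :=
  #|[pred m : mult n | is_partition m && spt_do_par j b m]|.

Definition B0 (j : nat) (z : int) : nat :=
  if (z <= 0)%R then 0%N else Bnat false j `|z|%N.
Definition B1 (j : nat) (z : int) : nat :=
  if (z <= 0)%R then 0%N else Bnat true j `|z|%N.

Definition pde_nat (n : nat) : nat :=
  #|[pred m : mult n | is_partition m &&
      [forall i : 'I_n, (m i <= 1)%N && ((m i != 0 :> nat) ==> ~~ odd i.+1)]]|.

(* p_de(0) = 1 (empty partition), p_de(n) = 0 for n < 0. *)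
Definition pde (z : int) : nat :=
  if (z < 0)%R then 0%N else pde_nat `|z|%N.

From mathcomp Require Import all_boot all_order all_algebra.
From mathcomp Require Import zify.
Import Order.TTheory GRing.Theory Num.Theory.

(* A partition in Spt j_do(n) whose smallest part is s+1 is determined by the
   set of its larger parts: distinct, larger than s+1 and of the parity opposite
   to s+1.  So B_b(j,n) is a sum over s of the number of such sets with sum
   n - j(s+1) and cardinality of parity b.
   Parity kills every term when k is odd, and for k even it leaves only odd
   smallest parts.  A set of even parts counted by B_1(k,2t-2k) with smallest
   part s+1 either avoids s+2, and adding 2k to the sum makes it a set counted by
   B_1(k,2t) with smallest part s+3, or contains s+2, and removing that part and
   adding 2k+1 makes it a set counted by B_0(k+1,2t+1) with smallest part s+3.
   What is left on the left-hand side is smallest part 1, which gives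
   p_de(2t-k). *)

Set Implicit Arguments.
Unset Strict Implicit.
Unset Printing Implicit Defensive.

Lemma card_in_bij (T1 T2 : finType) (P1 : {pred T1}) (P2 : {pred T2}) (f : T1 -> T2) :
  {in P1 &, injective f} -> {in P1, forall x, f x \in P2} ->
  {in P2, forall y, exists2 x, x \in P1 & y = f x} -> #|P1| = #|P2|.
Proof.
move=> f_inj fP1 fP2; rewrite -(card_in_imset f_inj); apply: eq_card => y.
by apply/imsetP/idP => [[x x1 ->] | /fP2]; first exact: fP1.
Qed.

Lemma card_exists_unique (I T : finType) (Q : pred T) (P : I -> pred T) :
  (forall i1 i2 x, P i1 x -> P i2 x -> i1 = i2) ->
  #|[pred x | Q x && [exists i, P i x]]| = \sum_i #|[pred x | Q x && P i x]|.
Proof.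
move=> P_uniq; rewrite -sum1_card big_mkcond /=.
under [RHS]eq_bigr => i _ do rewrite -sum1_card big_mkcond /=.
rewrite exchange_big /=; apply: eq_bigr => x _; rewrite inE.
under eq_bigr do rewrite inE.
case: (Q x) => /=; last by rewrite big1.
case: existsP => [[i0 Pi0] | noP]; last first.
  by rewrite big1 // => i _; case: ifP => // Pi; case: noP; exists i.
rewrite (bigD1 i0) //= Pi0 big1 // => i ne_i.
by case: ifP => // /P_uniq/(_ Pi0) eq_i; rewrite eq_i eqxx in ne_i.
Qed.

Section Tails.

Variable U : nat.
Implicit Types (E : {set 'I_U}) (x i : 'I_U).

(* The index i : 'I_U stands for the part i+1.  [ntail p L c n b] counts the
   sets of distinct parts larger than L+1 whose indices have parity p, adding up
   to n - c, and whose number has parity b. *)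
Definition weight E : nat := \sum_(i in E) i.+1.

Definition tail (p : bool) (L : nat) E : bool := [forall i in E, (L < i) && (odd i == p)].

Definition ntail (p : bool) (L c n : nat) (b : bool) : nat :=
  #|[pred E | [&& tail p L E, c + weight E == n & odd #|E| == b]]|.

Lemma tailP p L E : reflect {in E, forall i, L < i /\ odd i = p} (tail p L E).
Proof.
apply: (iffP forall_inP) => E_tail i /E_tail; first by case/andP=> -> /eqP.
by case=> -> ->; rewrite eqxx.
Qed.

Lemma tail_gt p L E i : tail p L E -> i \in E -> L < i.
Proof. by move/tailP => E_tail /E_tail []. Qed.

Lemma tailU1 p L x E : tail p L (x |: E) = [&& L < x, odd x == p & tail p L E].
Proof.
apply/forall_inP/and3P => [E_tail | [ltLx odd_x /forall_inP E_tail] i].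
  have /andP[-> ->] := E_tail x (setU11 x E); split=> //.
  by apply/forall_inP => i Ei; apply: E_tail; rewrite in_setU1 Ei orbT.
by rewrite in_setU1 => /predU1P[-> | /E_tail]; rewrite ?ltLx ?odd_x.
Qed.

Lemma tail_notinS L x E : ~~ odd L -> x = L.+1 :> nat ->
  tail true L E && (x \notin E) = tail true L.+2 E.
Proof.
move=> even_L x_val; apply/andP/tailP => [[/tailP E_tail xNE] i Ei | E_tail].
  have [ltLi odd_i] := E_tail i Ei; split=> //.
  have ne_ix : i != x :> nat by rewrite val_eqE; apply: contraNneq xNE => <-.
  have ne_iL2 : i != L.+2 :> nat.
    by apply: contraNneq even_L => eq_i; move: odd_i; rewrite eq_i /= negbK.
  lia.
split; first by apply/tailP => i /E_tail [ltLi odd_i]; split=> //; lia.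
by apply/negP => /E_tail []; lia.
Qed.

Lemma ltn_weight E i : i \in E -> i < weight E.
Proof. by move=> Ei; rewrite /weight (big_setD1 _ Ei) /= ltnS leq_addr. Qed.

Lemma odd_weight p L E : tail p L E -> odd (weight E) = ~~ p && odd #|E|.
Proof.
move/tailP => E_tail; rewrite /weight -sum1_card.
elim/big_rec2: _ => [|i w e Ei IH]; first by rewrite andbF.
by rewrite !oddD IH oddS (E_tail i Ei).2 /=; case: (p); case: (odd e).
Qed.

Lemma ntail0_lt p L c n b : n < c -> ntail p L c n b = 0.
Proof.
move=> lt_nc; apply: eq_card0 => E; rewrite !inE.
by apply/and3P => -[_ /eqP eq_n _]; move: lt_nc; rewrite -eq_n ltnNge leq_addr.
Qed.

Lemma ntail0_parity p L c n b : odd n != odd c (+) (~~ p && b) -> ntail p L c n b = 0.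
Proof.
move=> odd_n; apply: eq_card0 => E; rewrite !inE.
apply/and3P => -[E_tail /eqP eq_n /eqP odd_E].
by move: odd_n; rewrite -eq_n oddD (odd_weight E_tail) odd_E eqxx.
Qed.

Lemma ntail_shift p L c d n b : ntail p L (c + d) (n + d) b = ntail p L c n b.
Proof. by apply: eq_card => E; rewrite !inE addnAC eqn_add2r. Qed.

(* Split according to whether the smallest admissible part L+2 is present. *)
Lemma ntail_split L c n b : ~~ odd L -> L.+1 < U ->
  ntail true L c n b = ntail true L.+2 c n b + ntail true L.+2 (c + L.+2) n (~~ b).
Proof.
move=> even_L ltLU; pose x := Ordinal ltLU.
have tail_notin E : tail true L E && (x \notin E) = tail true L.+2 E by apply: tail_notinS.
have tail_x E : tail true L.+2 E -> x \notin E by rewrite -tail_notin => /andP[].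
rewrite /ntail -(cardID [pred E : {set 'I_U} | x \in E]) addnC; congr addn.
  apply: eq_card => E; rewrite !inE -tail_notin.
  by case: (x \in E); rewrite ?andbF ?andbT.
symmetry; apply: (card_in_bij (f := fun E => x |: E)).
- move=> E1 E2; rewrite !inE => /and3P[/tail_x x1 _ _] /and3P[/tail_x x2 _ _] eq_E.
  by rewrite -(setU1K x1) -(setU1K x2) eq_E.
- move=> E; rewrite !inE => /and3P[E_tail /eqP eq_n /eqP odd_E].
  have xNE := tail_x E E_tail; move: E_tail; rewrite -tail_notin xNE andbT => E_tail.
  rewrite eqxx andbT tailU1 E_tail /= ltnSn even_L /weight big_setU1 //= cardsU1 xNE /=.
  by rewrite addnA -eq_n odd_E negbK !eqxx.
move=> E; rewrite !inE => /andP[/and3P[E_tail /eqP eq_n /eqP odd_E] xE].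
exists (E :\ x); last by rewrite setD1K.
have xNE : x \notin E :\ x by rewrite !inE eqxx.
move: E_tail eq_n odd_E; rewrite -{1 2 3}(setD1K xE) tailU1 cardsU1 xNE /weight big_setU1 //=.
case/and3P => _ _ E_tail eq_n odd_E; rewrite !inE -tail_notin E_tail xNE.
by rewrite -addnA eq_n -odd_E negbK !eqxx.
Qed.

End Tails.

Lemma ntail_widen U U' p L c n b : n <= U -> U <= U' ->
  ntail U p L c n b = ntail U' p L c n b.
Proof.
move=> le_nU le_UU'; pose w := widen_ord le_UU'.
have w_inj : injective w by move=> i j /(congr1 val) eq_ij; apply: val_inj.
have tail_w (E : {set 'I_U}) : tail p L (w @: E) = tail p L E.
  apply/tailP/tailP => E_tail i; first by move=> Ei; exact: E_tail (w i) (imset_f w Ei).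
  by case/imsetP => j Ej ->; apply: E_tail.
have weight_w (E : {set 'I_U}) : weight (w @: E) = weight E.
  by rewrite /weight big_imset // => i j _ _ /w_inj.
rewrite /ntail; apply: (@card_in_bij _ _ _ _ (fun E : {set 'I_U} => w @: E)).
- by move=> E1 E2 _ _ /(imset_inj w_inj).
- by move=> E; rewrite !inE tail_w weight_w card_imset.
move=> E'; rewrite inE => /and3P[E'_tail /eqP eq_n odd_E'].
have lt_U i : i \in E' -> i < U.
  move=> E'i; apply: leq_trans (ltn_weight E'i) (leq_trans _ le_nU).
  by rewrite -eq_n leq_addl.
have eq_E' : E' = w @: [set i | w i \in E'].
  apply/setP => i; apply/idP/imsetP => [E'i | [j]]; last by rewrite inE => E'j ->.
  have w_i : w (Ordinal (lt_U i E'i)) = i by apply: val_inj.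
  by exists (Ordinal (lt_U i E'i)); rewrite ?inE w_i.
exists [set i | w i \in E']; last exact: eq_E'.
by rewrite inE -tail_w -weight_w -(card_imset _ w_inj) -eq_E' E'_tail eq_n odd_E' !eqxx.
Qed.

Section Encoding.

Variable n : nat.
Implicit Types (E : {set 'I_n}) (m : mult n) (s i : 'I_n).

Definition mult_of_set E : mult n := [ffun i => inord (i \in E)].

Definition mult_with (j : nat) s E : mult n :=
  [ffun i => if i == s then inord j else mult_of_set E i].

Lemma mult_of_setE E i : mult_of_set E i = (i \in E) :> nat.
Proof.
rewrite ffunE inordK // ltnS.
by case: (i \in E); rewrite /= ?(leq_trans _ (ltn_ord i)).
Qed.

Lemma mult_withE j s E i : j <= n ->
  mult_with j s E i = (if i == s then j else (i \in E : nat)) :> nat.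
Proof. by move=> le_jn; rewrite ffunE; case: eqP; rewrite ?inordK ?mult_of_setE. Qed.

Lemma sum_mult_of_set E : \sum_(i < n) i.+1 * mult_of_set E i = weight E.
Proof.
rewrite /weight [RHS]big_mkcond; apply: eq_bigr => i _; rewrite mult_of_setE.
by case: (i \in E); rewrite ?muln1 ?muln0.
Qed.

Lemma sum_mult_with j s E : s \notin E -> j <= n ->
  \sum_(i < n) i.+1 * mult_with j s E i = j * s.+1 + weight E.
Proof.
move=> sNE le_jn; rewrite (bigD1 s) //= mult_withE // eqxx mulnC; congr addn.
rewrite /weight [RHS]big_mkcond [RHS](bigD1 s) //= (negbTE sNE) add0n.
apply: eq_bigr => i ne_is; rewrite mult_withE // (negbTE ne_is).
by case: (i \in E); rewrite ?muln1 ?muln0.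
Qed.

Definition spt_at (j : nat) (b : bool) s m : bool :=
  [&& (0 < m s)%N,
      [forall i : 'I_n, (i < s)%N ==> (m i == 0 :> nat)],
      (m s == j :> nat),
      [forall i : 'I_n, (s < i)%N ==>
         ((m i <= 1)%N && ((m i != 0 :> nat) ==> (odd i.+1 != odd s.+1)))]
    & odd (\sum_(i < n | (s < i)%N) m i) == b].

Definition upper_support s m : {set 'I_n} := [set i : 'I_n | (s < i) && (m i != 0 :> nat)].

Lemma spt_at_unique j b s1 s2 m : spt_at j b s1 m -> spt_at j b s2 m -> s1 = s2.
Proof.
case/and5P=> m_s1 /forall_inP m_lt1 _ _ _ /and5P[m_s2 /forall_inP m_lt2 _ _ _].
case: (ltngtP s1 s2) => [lt12 | lt21 | /val_inj //].
  by move: m_s1; rewrite (eqP (m_lt2 _ lt12)).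
by move: m_s2; rewrite (eqP (m_lt1 _ lt21)).
Qed.

Lemma spt_at_mult_with j b s E : 0 < j -> j <= n -> tail (~~ odd s) s E ->
  spt_at j b s (mult_with j s E) = (odd #|E| == b).
Proof.
move=> j_gt0 le_jn E_tail; have E_gt i := @tail_gt _ _ _ _ i E_tail.
have val_lt i : i < s -> mult_with j s E i = 0 :> nat.
  move=> lt_is; rewrite mult_withE // -val_eqE ltn_eqF //.
  by case Ei: (i \in E) => //; have := E_gt i Ei; lia.
have val_gt i : s < i -> mult_with j s E i = (i \in E) :> nat.
  by move=> lt_si; rewrite mult_withE // -val_eqE gtn_eqF.
rewrite /spt_at mult_withE // eqxx j_gt0 eqxx /=.
have -> : \sum_(i < n | s < i) mult_with j s E i = #|E|.
  rewrite -sum1_card [RHS]big_mkcond [LHS]big_mkcond; apply: eq_bigr => i _.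
  case: ltnP => [/val_gt -> | le_is]; first by case: (i \in E).
  by case: ifP => // /E_gt; rewrite ltnNge le_is.
have -> : [forall i : 'I_n, (i < s) ==> (mult_with j s E i == 0 :> nat)].
  by apply/forallP => i; apply/implyP => /val_lt ->.
suff -> : [forall i : 'I_n, (s < i) ==> (mult_with j s E i <= 1) &&
    ((mult_with j s E i != 0 :> nat) ==> (~~ odd i != ~~ odd s))] by [].
apply/forallP => i; apply/implyP => /val_gt ->; case Ei: (i \in E) => //=.
by move/tailP: E_tail => /(_ i Ei) [_ ->]; case: (odd s).
Qed.

Lemma mult_with_upper_support j b s m : spt_at j b s m ->
  mult_with j s (upper_support s m) = m.
Proof.
case/and5P=> _ /forall_inP m_lt /eqP m_s /forall_inP m_gt _.
have le_jn : j <= n by rewrite -m_s -ltnS.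
apply/ffunP => i; apply: val_inj; rewrite /= mult_withE // inE.
case: (ltngtP i s) => [lt_is | lt_si | /val_inj ->]; last by rewrite eqxx.
  by rewrite -val_eqE ltn_eqF //= (eqP (m_lt _ lt_is)).
by rewrite -val_eqE gtn_eqF //=; have /andP[] := m_gt _ lt_si; case: (m i : nat) => [|[]].
Qed.

Lemma tail_upper_support j b s m : spt_at j b s m ->
  tail (~~ odd s) s (upper_support s m).
Proof.
case/and5P=> _ _ _ /forall_inP m_gt _; apply/tailP => i; rewrite inE => /andP[lt_si m_i].
have /andP[_ /implyP/(_ m_i) /= odd_i] := m_gt _ lt_si.
by split=> //; move: odd_i; case: (odd i); case: (odd s).
Qed.

Lemma card_spt_at j b s : 0 < j ->
  #|[pred m | is_partition m && spt_at j b s m]| = ntail n (~~ odd s) s (j * s.+1) n b.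
Proof.
move=> j_gt0; symmetry; rewrite /ntail.
have le_jn E : j * s.+1 + weight E = n -> j <= n.
  by move=> <-; apply: leq_trans (leq_addr _ _); rewrite leq_pmulr.
have tail_s E : tail (~~ odd s) s E -> s \notin E.
  by move=> E_tail; apply/negP => /(tail_gt E_tail); rewrite ltnn.
apply: (@card_in_bij _ _ _ _ (mult_with j s)).
- move=> E1 E2; rewrite !inE => /and3P[/tail_s s1 /eqP/le_jn le_jn' _] /and3P[/tail_s s2 _ _].
  move=> eq_m; apply/setP => i; have := congr1 (fun m : mult n => m i : nat) eq_m.
  rewrite /= !mult_withE //; case: eqP => [-> _ | _]; first by rewrite (negbTE s1) (negbTE s2).
  by case: (i \in E1); case: (i \in E2).
- move=> E; rewrite !inE => /and3P[E_tail /eqP eq_n odd_E].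
  have le_jn' := le_jn E eq_n.
  by rewrite /is_partition sum_mult_with ?tail_s ?eq_n ?spt_at_mult_with ?eqxx.
move=> m; rewrite inE => /andP[part_m spt_m].
have E_tail := tail_upper_support spt_m.
have eq_m := mult_with_upper_support spt_m.
have le_jn' : j <= n by case/and5P: spt_m => _ _ /eqP <- _ _; rewrite -ltnS.
set E := upper_support s m in E_tail eq_m *.
exists E; last by rewrite eq_m.
move: part_m spt_m; rewrite -eq_m /is_partition sum_mult_with ?tail_s //.
by rewrite spt_at_mult_with // inE E_tail => -> ->.
Qed.

End Encoding.

Lemma Bnat_spt_at b j n :
  Bnat b j n = \sum_(s < n) #|[pred m : mult n | is_partition m && spt_at j b s m]|.
Proof. by rewrite -card_exists_unique //; apply: spt_at_unique. Qed.

Lemma Bnat0 b j : Bnat b j 0 = 0.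
Proof. by rewrite Bnat_spt_at big_ord0. Qed.

Lemma Bnat_ntail b j n U R : 0 < j -> n <= U -> n <= R ->
  Bnat b j n = \sum_(0 <= s < R) ntail U (~~ odd s) s (j * s.+1) n b.
Proof.
move=> j_gt0 le_nU le_nR; rewrite (@big_cat_nat _ _ _ n) //= [X in _ + X]big_nat_cond.
rewrite [X in _ + X]big1 => [|s /andP[/andP[le_ns _] _]]; last first.
  by apply: ntail0_lt; apply: leq_trans (leq_pmull _ j_gt0); rewrite ltnS.
rewrite addn0 big_mkord Bnat_spt_at; apply: eq_bigr => s _.
by rewrite card_spt_at //; apply: ntail_widen.
Qed.

Lemma pde_ntail N U : N <= U ->
  pde_nat N = ntail U true 0 0 N false + ntail U true 0 0 N true.
Proof.
move=> le_NU; rewrite -!(ntail_widen _ _ _ _ (leqnn N) le_NU).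
transitivity #|[pred E : {set 'I_N} | tail true 0 E && (weight E == N)]|; last first.
  rewrite /ntail -(cardID [pred E : {set 'I_N} | odd #|E|]) addnC.
  by congr addn; apply: eq_card => E; rewrite !inE add0n; case: (odd #|E|); rewrite ?andbT ?andbF.
symmetry; apply: (@card_in_bij _ _ _ _ (@mult_of_set N)).
- move=> E1 E2 _ _ eq_m; apply/setP => i.
  have := congr1 (fun m : mult N => m i : nat) eq_m; rewrite /= !mult_of_setE.
  by case: (i \in E1); case: (i \in E2).
- move=> E; rewrite !inE => /andP[/tailP E_tail /eqP eq_N].
  rewrite /is_partition sum_mult_of_set eq_N eqxx; apply/forallP => i.
  by rewrite mult_of_setE; case Ei: (i \in E) => //=; have [_ ->] := E_tail i Ei.
move=> m; rewrite inE => /andP[part_m /forallP m_distinct_even].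
pose E := [set i : 'I_N | m i != 0 :> nat].
have eq_m : mult_of_set E = m.
  apply/ffunP => i; apply: val_inj; rewrite /= mult_of_setE inE.
  by case/andP: (m_distinct_even i); case: (m i : nat) => [|[]].
exists E; last by rewrite eq_m.
move: part_m; rewrite -eq_m /is_partition sum_mult_of_set inE => ->; rewrite andbT.
apply/tailP => i; rewrite inE => m_i.
have /andP[_ /implyP/(_ m_i) /= /negPn odd_i] := m_distinct_even i.
by split=> //; case: (nat_of_ord i) odd_i.
Qed.

Lemma Bnat0_parity b j n : 0 < j -> odd j = b -> odd n != b -> Bnat b j n = 0.
Proof.
move=> j_gt0 odd_j odd_n; rewrite (@Bnat_ntail _ _ _ n n) // big1 // => s _.
apply: ntail0_parity; rewrite negbK oddM odd_j /=.
by move: odd_n; case: (odd s); case: (b); case: (odd n).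
Qed.

Lemma pde_nat_odd N : odd N -> pde_nat N = 0.
Proof. by move=> odd_N; rewrite (@pde_ntail N N) // !ntail0_parity ?odd_N. Qed.

Lemma ntail_recurrence U k s n : ~~ odd k -> ~~ odd s -> s.+1 < U ->
  ntail U true s.+2 (k.+1 * s.+3) (n + (2 * k).+1) false
    + ntail U true s.+2 (k * s.+3) (n + 2 * k) true
  = ntail U true s (k * s.+1) n true.
Proof.
move=> even_k even_s lt_sU.
have -> : k.+1 * s.+3 = k * s.+1 + s.+2 + (2 * k).+1 by nia.
have -> : k * s.+3 = k * s.+1 + 2 * k by nia.
by rewrite !ntail_shift [RHS]ntail_split // addnC.
Qed.

Section EvenMultiplicity.

Variables k t : nat.
Hypotheses (even_k : ~~ odd k) (k_gt0 : 0 < k).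

Let R := (2 * t).+2.
Let U := R.+2.

Let X s := ntail U (~~ odd s) s (k.+1 * s.+1) (2 * t + 1) false
  + ntail U (~~ odd s) s (k * s.+1) (2 * t) true.
Let Y s := ntail U (~~ odd s) s (k * s.+1) (2 * t - 2 * k) true.

Lemma Bnat_X : Bnat false k.+1 (2 * t + 1) + Bnat true k (2 * t) = \sum_(0 <= s < R.+2) X s.
Proof. by rewrite (@Bnat_ntail _ _ _ U R.+2) ?(@Bnat_ntail _ _ _ U R.+2) -?big_split //; lia. Qed.

Lemma Bnat_Y : Bnat true k (2 * t - 2 * k) = \sum_(0 <= s < R) Y s.
Proof. by rewrite (@Bnat_ntail _ _ _ U R) //; lia. Qed.

Lemma X_0 : X 0 = if k <= 2 * t then pde_nat (2 * t - k) else 0.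
Proof.
rewrite /X /= !muln1; case: ifP => le_k2t; last by rewrite !ntail0_lt //; lia.
rewrite (@pde_ntail _ U); last lia.
set n := 2 * t - k.
have -> : 2 * t + 1 = n + k.+1 by rewrite /n; lia.
have -> : 2 * t = n + k by rewrite /n; lia.
by rewrite -[k.+1]add0n -[k]add0n !ntail_shift.
Qed.

Lemma X_1 : X 1 = 0.
Proof. by rewrite /X !ntail0_parity // !muln2 mul2n ?oddD !odd_double. Qed.

Lemma X_step s : s < R -> X s.+2 = Y s.
Proof.
move=> lt_sR; rewrite /X /Y /= !negbK.
have even_2t2k : odd (2 * t - 2 * k) = false by rewrite -mulnBr mul2n odd_double.
case: (boolP (odd s)) => [odd_s | even_s].
  rewrite !ntail0_parity //;
    by rewrite ?even_2t2k ?oddD ?oddM /= ?odd_s ?(negbTE even_k); case: (odd t).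
case: (leqP k t) => [le_kt | lt_tk]; last by rewrite !ntail0_lt //; nia.
set n := 2 * t - 2 * k.
have -> : 2 * t + 1 = n + (2 * k).+1 by rewrite /n; lia.
have -> : 2 * t = n + 2 * k by rewrite /n; lia.
by rewrite ntail_recurrence // /U; lia.
Qed.

Lemma Bnat_identity_even : Bnat false k.+1 (2 * t + 1) + Bnat true k (2 * t)
  = Bnat true k (2 * t - 2 * k) + (if k <= 2 * t then pde_nat (2 * t - k) else 0).
Proof.
rewrite Bnat_X Bnat_Y [in LHS]big_nat_recl // [in LHS]big_nat_recl // X_0 X_1 add0n addnC.
by congr addn; apply: eq_big_nat => s /andP[_ /X_step].
Qed.

End EvenMultiplicity.

Lemma Bnat_identity k t : 0 < k ->
  Bnat false k.+1 (2 * t + 1) + Bnat true k (2 * t)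
  = Bnat true k (2 * t - 2 * k) + (if k <= 2 * t then pde_nat (2 * t - k) else 0).
Proof.
move=> k_gt0; case: (boolP (odd k)) => [odd_k | even_k]; last exact: Bnat_identity_even.
have even_2t : odd (2 * t) = false by rewrite mul2n odd_double.
have even_2t2k : odd (2 * t - 2 * k) = false by rewrite -mulnBr mul2n odd_double.
rewrite !Bnat0_parity // ?even_2t2k ?addn1 ?oddS ?even_2t ?odd_k //.
by case: ifP => // le_k2t; rewrite pde_nat_odd // oddB // even_2t odd_k.
Qed.

Lemma B0_nat j n : 0 < n -> B0 j (n%:Z)%R = Bnat false j n.
Proof. by move=> n_gt0; rewrite /B0; case: ifP => //; lia. Qed.

Lemma B1_nat j n : 0 < n -> B1 j (n%:Z)%R = Bnat true j n.
Proof. by move=> n_gt0; rewrite /B1; case: ifP => //; lia. Qed.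

Lemma B1_subn j m n : B1 j (m%:Z - n%:Z)%R = Bnat true j (m - n).
Proof.
rewrite /B1; case: ifP => [le0 | gt0]; first by rewrite (_ : m - n = 0) ?Bnat0; lia.
by rewrite (_ : `|(m%:Z - n%:Z)%R|%N = m - n) //; lia.
Qed.

Lemma pde_subn m n : pde (m%:Z - n%:Z)%R = if n <= m then pde_nat (m - n) else 0.
Proof.
rewrite /pde; case: ifP => [lt0 | ge0]; case: leqP => //; try lia.
by rewrite (_ : `|(m%:Z - n%:Z)%R|%N = m - n) //; lia.
Qed.

Theorem lemma1 (k t : nat) (hk : (1 <= k)%N) (ht : (1 <= t)%N) :
  (B0 k.+1 (2 * t + 1)%N%:Z + B1 k (2 * t)%N%:Z
   = B1 k (2 * t%:Z - 2 * k%:Z)%R + pde (2 * t%:Z - k%:Z)%R)%N.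
Proof.
have -> : (2 * t%:Z - 2 * k%:Z = (2 * t)%N%:Z - (2 * k)%N%:Z)%R by lia.
have -> : (2 * t%:Z - k%:Z = (2 * t)%N%:Z - k%:Z)%R by lia.
rewrite B0_nat ?B1_nat ?B1_subn ?pde_subn ?Bnat_identity //; lia.
Qed.
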